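(* Let $q$ be a prime power, let $M$ be an invertible $s\times s$ matrix over $\mathbb{F}_q$, and let $1\le t_i\le t_o\le s$. Then the function $\mathbf{y}=\mathbf{x}M^{-1}$ (on row vectors in $\mathbb{F}_q^s$) defines a linear $(t_i,t_o,s,q)$-AONT if and only if every $t_o\times t_i$ submatrix of $M$ has rank $t_i$.
   Context: For a bijection $\phi:\Gamma^s\to\Gamma^s$ over an alphabet $\Gamma$ of size $v$, its array representation is the $v^s\times 2s$ array having, for each $\mathbf{x}=(x_1,\dots,x_s)\in\Gamma^s$, a row $(x_1,\dots,x_s,y_1,\dots,y_s)$ with $(y_1,\dots,y_s)=\phi(\mathbf{x})$. An $N\times k$ array is unbiased with respect to a set $D$ of columns if the rows restricted to $D$ contain every $|D|$-tuple over $\Gamma$ exactly $N/v^{|D|}$ times. $\phi$ is a $(t_i,t_o,s,v)$-AONT if its array representation (columns labelled $1,\dots,2s$) is unbiased with respect to $\{1,\dots,s\}$, $\{s+1,\dots,2s\}$, and $I\cup J$ for every $I\subseteq\{1,\dots,s\}$ with $|I|=t_i$ and every $J\subseteq\{s+1,\dots,2s\}$ with $|J|=s-t_o$. A linear $(t_i,t_o,s,q)$-AONT is one over $\Gamma=\mathbb{F}_q$ of the form $\mathbf{x}\mapsto\mathbf{x}M^{-1}$ for an invertible $s\times s$ matrix $M$ over $\mathbb{F}_q$ (so that $\mathbf{x}=\mathbf{y}M$). *)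

From HB Require Import structures.
From mathcomp Require Import all_boot all_order all_algebra.
Set Implicit Arguments. Unset Strict Implicit. Unset Printing Implicit Defensive.
Import GRing.Theory.
Local Open Scope ring_scope.

(* Array representation of phi : Gamma^s -> Gamma^s: the row indexed by x is
   (x_1,...,x_s, y_1,...,y_s) with y = phi x; columns are 'I_(s + s),
   the first block (lshift) being the inputs, the second (rshift) the outputs. *)
Definition array_row (Gamma : finType) (s : nat)
  (phi : 'rV[Gamma]_s -> 'rV[Gamma]_s) (x : 'rV[Gamma]_s) : 'rV[Gamma]_(s + s) :=
  row_mx x (phi x).

(* The array (rows indexed by x in Gamma^s, so N = v^s rows) is unbiased
   w.r.t. column set D: every |D|-tuple (given as the restriction to D of some
   f) occurs exactly N / v^|D| times, stated multiplicatively. *)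
Definition unbiased (Gamma : finType) (s : nat)
  (phi : 'rV[Gamma]_s -> 'rV[Gamma]_s) (D : {set 'I_(s + s)}) : Prop :=
  forall f : {ffun 'I_(s + s) -> Gamma},
    (#|[set x : 'rV[Gamma]_s | [forall j in D, array_row phi x ord0 j == f j]]|
       * #|Gamma| ^ #|D| = #|Gamma| ^ s)%N.

Definition inputs (s : nat) : {set 'I_(s + s)} := [set lshift s i | i : 'I_s].
Definition outputs (s : nat) : {set 'I_(s + s)} := [set rshift s i | i : 'I_s].

Definition AONT (Gamma : finType) (ti to s : nat)
  (phi : 'rV[Gamma]_s -> 'rV[Gamma]_s) : Prop :=
  [/\ bijective phi,
      unbiased phi (inputs s),
      unbiased phi (outputs s) &
      forall I J : {set 'I_s}, #|I| = ti -> #|J| = (s - to)%N ->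
        unbiased phi ((@lshift s s @: I) :|: (@rshift s s @: J))].

Definition linmap (F : fieldType) (s : nat) (M : 'M[F]_s) : 'rV[F]_s -> 'rV[F]_s :=
  fun x => x *m invmx M.

(* For every M the array of x |-> x M^-1 is additive in x, so the rows agreeing
   with a prescribed tuple on a column set D form a coset of the rows vanishing
   on D, or are empty: D is unbiased iff every tuple on D is attained.  Writing
   x = y M, the row restricted to I u J is ((y M)_I, y_J).  Prescribing y_J and
   solving (y M)_I = a for the remaining coordinates y_K (K the complement of J,
   |K| = t_o) is possible for every a iff the K x I submatrix of M has rank |I|. *)
From HB Require Import structures.
From mathcomp Require Import all_boot all_order all_algebra.
Set Implicit Arguments. Unset Strict Implicit. Unset Printing Implicit Defensive.
Import Order.TTheory GRing.Theory.
Local Open Scope ring_scope.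

Lemma ltn_homo_inj m n (e : 'I_m -> 'I_n) : {homo e : i j / (i < j)%N} -> injective e.
Proof. by move=> e_lt; apply/inc_inj/le_mono. Qed.

Lemma set_ord_increasing_enum n m (A : {set 'I_n}) : #|A| = m ->
  exists2 e : 'I_m -> 'I_n, {homo e : i j / (i < j)%N} & A = [set e k | k : 'I_m].
Proof.
move=> <-; exists Order.enum_val.
  exact/mono2W/leW_mono/(Order.le_enum_val le_total).
apply/setP => x; apply/idP/imsetP => [Ax | [k _ ->]]; last exact: Order.enum_valP.
by exists (Order.enum_rank_in Ax x); rewrite ?Order.enum_rankK_in.
Qed.

Section AdditiveCoordinateFibres.
Variables (U V : finZmodType) (n : nat) (g : U -> 'rV[V]_n).
Hypothesis g_sub : {morph g : x y / x - y}.
Implicit Types (D : {set 'I_n}) (f : {ffun 'I_n -> V}).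

Definition coord_fibre (D : {set 'I_n}) (f : {ffun 'I_n -> V}) : {set U} :=
  [set x | [forall j in D, g x ord0 j == f j]].

Definition coord_surjective (D : {set 'I_n}) : Prop :=
  forall f : {ffun 'I_n -> V}, exists x, forall j, j \in D -> g x ord0 j = f j.

Lemma card_coord_fibre D f x0 : (forall j, j \in D -> g x0 ord0 j = f j) ->
  #|coord_fibre D f| = #|coord_fibre D [ffun => 0]|.
Proof.
move=> x0f; rewrite -[RHS](card_preimset _ (addIr (- x0))); apply: eq_card => x.
rewrite !inE; apply: eq_forallb_in => j jD.
by rewrite g_sub !mxE ffunE subr_eq0 x0f.
Qed.

Lemma coord_surjective_card D : coord_surjective D ->
  forall f, (#|coord_fibre D f| * #|V| ^ #|D|)%N = #|U|.
Proof.
move=> g_surj f; have [x0 x0f] := g_surj f; rewrite (card_coord_fibre x0f).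
pose restr x := [ffun j => if j \in D then g x ord0 j else 0].
have restr_on x : restr x \in pffun_on 0 D predT.
  apply/pffun_onP; split=> [|_ /mapP[j _ ->] //].
  by apply/subsetP => j; rewrite inE ffunE; case: (j \in D); rewrite ?eqxx.
rewrite -[RHS]sum1_card (partition_big restr _ (fun x _ => restr_on x)) /=.
rewrite (eq_bigr (fun _ => #|coord_fibre D [ffun => 0]|)).
  by rewrite sum_nat_const card_pffun_on mulnC.
move=> h /pffun_onP[/subsetP hD _].
have [xh xhh] := g_surj h; rewrite -(card_coord_fibre xhh) sum1_card.
apply: eq_card => x; rewrite [RHS]inE; transitivity (restr x == h) => //.
apply/eqP/forall_inP => [<- j jD | xh_eq].
  by rewrite ffunE jD.
apply/ffunP => j; rewrite ffunE; case: ifP => [jD | jD]; first exact/eqP/xh_eq.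
by apply/esym/eqP; apply: contraFT jD => /hD.
Qed.

Lemma coord_surjectiveP D :
  coord_surjective D <-> forall f, (#|coord_fibre D f| * #|V| ^ #|D|)%N = #|U|.
Proof.
split=> [|card_fibre f]; first exact: coord_surjective_card.
have U_gt0 : (0 < #|U|)%N by apply/card_gt0P; exists 0.
have /card_gt0P[x] : (0 < #|coord_fibre D f|)%N.
  by move: U_gt0; rewrite -(card_fibre f) muln_gt0 => /andP[].
by rewrite inE => /forall_inP x_f; exists x => j /x_f/eqP.
Qed.

End AdditiveCoordinateFibres.

Section LinearArray.
Variables (F : finFieldType) (s : nat) (M : 'M[F]_s).
Hypothesis M_unit : M \in unitmx.

Lemma unbiased_linmapP D :
  unbiased (linmap M) D <-> coord_surjective (array_row (linmap M)) D.
Proof.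
have array_sub : {morph array_row (linmap M) : x y / x - y}.
  by move=> x y; rewrite /array_row /linmap mulmxBl opp_row_mx add_row_mx.
by apply: iff_sym; have := coord_surjectiveP array_sub D; rewrite card_mx mul1n.
Qed.

Lemma linmap_bij : bijective (linmap M).
Proof. by exists (fun y => y *m M) => x; rewrite /linmap ?mulmxK ?mulmxKV. Qed.

Lemma unbiased_linmap_inputs : unbiased (linmap M) (inputs s).
Proof.
apply/unbiased_linmapP => f; exists (\row_i f (lshift s i)) => _ /imsetP[i _ ->].
by rewrite /array_row row_mxEl mxE.
Qed.

Lemma unbiased_linmap_outputs : unbiased (linmap M) (outputs s).
Proof.
apply/unbiased_linmapP => f; exists (\row_k f (rshift s k) *m M) => _ /imsetP[k _ ->].
by rewrite /array_row /linmap row_mxEr mulmxK // mxE.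
Qed.

Lemma linmap_coord_surjectiveP (I J : {set 'I_s}) :
  coord_surjective (array_row (linmap M)) (@lshift s s @: I :|: @rshift s s @: J) <->
  forall a b : 'I_s -> F, exists y : 'rV[F]_s,
    (forall i, i \in I -> (y *m M) ord0 i = a i) /\
    (forall k, k \in J -> y ord0 k = b k).
Proof.
have array_mulM y : array_row (linmap M) (y *m M) = row_mx (y *m M) y.
  by rewrite /array_row /linmap mulmxK.
split=> [surj a b | solvable f].
  have [x x_ab] := surj [ffun j => row_mx (\row_i a i) (\row_k b k) ord0 j].
  exists (x *m invmx M); rewrite mulmxKV //; split=> [i iI | k kJ].
    have /x_ab : lshift s i \in @lshift s s @: I :|: @rshift s s @: J.
      by rewrite inE imset_f.
    by rewrite ffunE /array_row !row_mxEl mxE.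
  have /x_ab : rshift s k \in @lshift s s @: I :|: @rshift s s @: J.
    by rewrite inE orbC imset_f.
  by rewrite ffunE /array_row !row_mxEr mxE.
have [y [yM_f y_f]] := solvable (fun i => f (lshift s i)) (fun k => f (rshift s k)).
exists (y *m M) => _ /setUP[] /imsetP[i iIJ ->].
  by rewrite array_mulM row_mxEl yM_f.
by rewrite array_mulM row_mxEr y_f.
Qed.

End LinearArray.

Section RowSelection.
Variables (R : pzSemiRingType) (m n : nat) (r : 'I_m -> 'I_n).

Lemma mul_rowsub1_mx_out (u : 'rV[R]_m) k : k \notin [set r i | i : 'I_m] ->
  (u *m rowsub r 1%:M) ord0 k = 0.
Proof.
move=> kr; rewrite mxE big1 // => i _; rewrite !mxE.
by case: eqP => [ri_k | _]; [rewrite -ri_k imset_f in kr | rewrite mulr0].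
Qed.

Hypothesis r_inj : injective r.

Lemma mul_rowsub1_mx_image (u : 'rV[R]_m) i : (u *m rowsub r 1%:M) ord0 (r i) = u ord0 i.
Proof.
rewrite mxE (bigD1 i) //= !mxE eqxx mulr1 big1 ?addr0 // => k ki.
by rewrite !mxE (inj_eq r_inj) (negbTE ki) mulr0.
Qed.

Lemma rowsub1_mx_supported (y : 'rV[R]_n) :
  (forall k, k \notin [set r i | i : 'I_m] -> y ord0 k = 0) ->
  \row_i y ord0 (r i) *m rowsub r 1%:M = y.
Proof.
move=> y_out; apply/rowP => k.
have [/imsetP[i _ ->] | kr] := boolP (k \in [set r i | i : 'I_m]).
  by rewrite mul_rowsub1_mx_image mxE.
by rewrite mul_rowsub1_mx_out ?y_out.
Qed.

End RowSelection.

Lemma rank_mxsubP (F : fieldType) (s p q : nat) (M : 'M[F]_s)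
    (r : 'I_p -> 'I_s) (c : 'I_q -> 'I_s) :
  injective r -> injective c ->
  (forall a b : 'I_s -> F, exists y : 'rV[F]_s,
     (forall i, i \in [set c l | l : 'I_q] -> (y *m M) ord0 i = a i) /\
     (forall k, k \in ~: [set r i | i : 'I_p] -> y ord0 k = b k))
  <-> \rank (mxsub r c M) = q.
Proof.
move=> r_inj c_inj; set A := mxsub r c M.
have A_mul (u : 'rV_p) l : (u *m A) ord0 l = (u *m rowsub r 1%:M *m M) ord0 (c l).
  rewrite /A mxsubcr -[M in rowsub r M]mul1mx -mul_rowsub_mx.
  by rewrite mulmx_colsub mulmxA mxE.
split=> [solvable | /eqP A_full a b].
  apply/eqP; rewrite -/(row_full A) -sub1mx; apply/row_subP => l0.
  have [y [y_c y_out]] := solvable (fun i => (i == c l0)%:R) (fun _ => 0).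
  apply/submxP; exists (\row_i y ord0 (r i)); apply/rowP => l.
  rewrite A_mul (rowsub1_mx_supported r_inj) => [|k kr]; last by apply: y_out; rewrite inE.
  by rewrite y_c ?imset_f // !mxE (inj_eq c_inj) eq_sym.
pose yb := \row_k (if k \in [set r i | i : 'I_p] then 0 else b k).
have /submxP[u u_A] : (\row_l (a (c l) - (yb *m M) ord0 (c l)) <= A)%MS.
  exact: submx_full.
exists (yb + u *m rowsub r 1%:M); split=> [_ /imsetP[l _ ->] | k].
  by rewrite mulmxDl mxE -A_mul -u_A addrC mxE subrK.
by rewrite inE => kr; rewrite mxE mul_rowsub1_mx_out // mxE (negbTE kr) addr0.
Qed.

Theorem mainTheorem4 (F : finFieldType) (s ti to : nat) (M : 'M[F]_s) :
  M \in unitmx -> (1 <= ti)%N -> (ti <= to)%N -> (to <= s)%N ->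
  (AONT ti to (linmap M) <->
   forall (r : 'I_to -> 'I_s) (c : 'I_ti -> 'I_s),
     {homo r : i j / (i < j)%N} -> {homo c : i j / (i < j)%N} ->
     \rank (mxsub r c M) = ti).
Proof.
move=> M_unit _ _ le_to_s; split.
  case=> _ _ _ unbiased_IJ r c r_inc c_inc.
  have [r_inj c_inj] := (ltn_homo_inj r_inc, ltn_homo_inj c_inc).
  apply/(rank_mxsubP M r_inj c_inj)/(linmap_coord_surjectiveP M_unit)/unbiased_linmapP.
  apply: unbiased_IJ; first by rewrite card_imset // card_ord.
  by rewrite cardsCs setCK card_imset // !card_ord.
move=> rank_sub; split.
- exact: linmap_bij.
- exact: unbiased_linmap_inputs.
- exact: unbiased_linmap_outputs.
move=> I J card_I card_J.
have [c c_inc ->] := set_ord_increasing_enum card_I.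
have [r r_inc notJ_r] : exists2 r : 'I_to -> 'I_s,
    {homo r : i j / (i < j)%N} & ~: J = [set r k | k : 'I_to].
  by apply: set_ord_increasing_enum; rewrite cardsCs setCK card_J card_ord subKn.
rewrite -[J]setCK notJ_r; apply/unbiased_linmapP/(linmap_coord_surjectiveP M_unit).
exact/(rank_mxsubP M (ltn_homo_inj r_inc) (ltn_homo_inj c_inc))/rank_sub.
Qed.
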